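(* Let $A$ be a primitive set of composite numbers, and let $v\in(0,1)$. If $P(a)^{1+v}>a$ for all $a\in A$, then the sets $\mathrm{L}_{ac}$, ranging over pairs $(a,c)$ with $a\in A$ and $c\in C_a^v$, are pairwise disjoint (i.e. $\mathrm{L}_{ac}\cap\mathrm{L}_{a'c'}=\emptyset$ whenever $(a,c)\ne(a',c')$).
   Context: $P(a)$ denotes the largest prime factor of $a>1$, and $a^*=a/P(a)$. For an integer $m>1$, $\mathrm{L}_m=\{bm: b\in\mathbb{N},\ \text{every prime } p\mid b \text{ satisfies } p\ge P(m)\}$. For $a\in A$, $C_a^v=\{c\in\mathbb{N}:\ \text{every prime } p\mid c \text{ satisfies } P(a^* )\le p<P(a^* )^{1/\sqrt v}\}$ (note $1\in C_a^v$). A set is primitive if no member divides another. *)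

From Stdlib Require Import Reals.
From mathcomp Require Import all_boot.

Set Implicit Arguments.
Unset Strict Implicit.
Unset Printing Implicit Defensive.

Definition P (a : nat) : nat := max_pdiv a.

Definition astar (a : nat) : nat := a %/ P a.

Definition composite (a : nat) : Prop := 1 < a /\ ~~ prime a.

Definition primitive_set (A : nat -> Prop) : Prop :=
  forall a b, A a -> A b -> a %| b -> a = b.

Definition Lset (m x : nat) : Prop :=
  exists b, 0 < b /\ (forall p, prime p -> p %| b -> P m <= p) /\ x = b * m.

Definition Cset (a : nat) (v : R) (c : nat) : Prop :=
  0 < c /\ forall p, prime p -> p %| c ->
    P (astar a) <= p /\ Rlt (INR p) (Rpower (INR (P (astar a))) (Rdiv R1 (sqrt v))).

From Stdlib Require Import Reals Lra Psatz.
From mathcomp Require Import all_boot.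

Set Implicit Arguments.
Unset Strict Implicit.
Unset Printing Implicit Defensive.

(* Write a = s p with p = P(a), s = a^*, q = P(s), and let t = sqrt v.  The
   hypothesis P(a)^(1+v) > a gives s < p^(t^2), and the primes of c lie below
   q^(1/t) < p^t, so every prime factor of s c is below p^t < p.  Hence P(ac) = p,
   and every x in L_{ac} has the same valuations as s c at all primes below p.
   Let x lie in L_{ac} and L_{a'c'}.  If p < p', then p divides s' c'; if it
   divides c', then p^t < q'.  Either way every prime factor of s c is below q',
   which forces p <= q', p | s' and s | s', so a | a'.  If p = p', then
   s c = s' c', and comparing valuations at the primes up to min(q, q') shows
   that one of s, s' divides the other.  So a and a' are comparable under divisibility, hence equal
   by primitivity, and then c = c'. *)

Lemma logn_gt0_prime r n : prime r -> 0 < n -> (0 < logn r n) = (r %| n).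
Proof. by move=> pr n_gt0; rewrite logn_gt0 mem_primes pr n_gt0. Qed.

Lemma logn_eq0_ndvd r n : ~~ (r %| n) -> logn r n = 0.
Proof. by move=> r_ndvd; rewrite lognE (negbTE r_ndvd) !andbF. Qed.

Lemma dvdn_from_logn d n : 0 < d -> 0 < n ->
  (forall r, prime r -> r %| d -> logn r d <= logn r n) -> d %| n.
Proof.
move=> d_gt0 n_gt0 le_log; apply/dvdn_partP => // r.
by rewrite mem_primes => /and3P[pr _ r_dvd]; rewrite p_part pfactor_dvdn // le_log.
Qed.

Lemma leq_max_pdiv r n : prime r -> 0 < n -> r %| n -> r <= max_pdiv n.
Proof. by move=> pr n_gt0 r_dvd; apply: max_pdiv_max; rewrite mem_primes pr n_gt0. Qed.

Lemma max_pdiv_eq p n : prime p -> 0 < n -> p %| n ->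
  (forall r, prime r -> r %| n -> r <= p) -> max_pdiv n = p.
Proof.
move=> pp n_gt0 p_dvd le_p; apply/anti_leq; rewrite leq_max_pdiv // andbT.
apply: le_p (max_pdiv_dvd n); apply: max_pdiv_prime.
exact: leq_trans (prime_gt1 pp) (dvdn_leq n_gt0 p_dvd).
Qed.

Lemma dvdn_total_of_smooth_mul_rough s c q s' c' q' :
  0 < s -> 0 < c -> 0 < s' -> 0 < c' ->
  (forall r, prime r -> r %| s -> r <= q) ->
  (forall r, prime r -> r %| c -> q <= r) ->
  (forall r, prime r -> r %| s' -> r <= q') ->
  (forall r, prime r -> r %| c' -> q' <= r) ->
  s * c = s' * c' -> (s %| s') || (s' %| s).
Proof.
wlog le_qq' : s c q s' c' q' / q <= q'.
  move=> gen s0 c0 s0' c0' sm ro sm' ro' eq_sc.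
  have [le|/ltnW le] := leqP q q'; first exact: (gen s c q s' c' q').
  by rewrite orbC; apply: (gen s' c' q' s c q).
move=> s0 c0 s0' c0' smooth rough smooth' rough' eq_sc.
have logn_c r : prime r -> r < q -> logn r c = 0.
  by move=> pr lt_rq; apply/logn_eq0_ndvd/negP => /(rough _ pr); rewrite leqNgt lt_rq.
have logn_c' r : prime r -> r < q' -> logn r c' = 0.
  by move=> pr lt_rq; apply/logn_eq0_ndvd/negP => /(rough' _ pr); rewrite leqNgt lt_rq.
have logn_sc r : logn r (s * c) = logn r (s' * c') by rewrite eq_sc.
have logn_below r : prime r -> r < q -> logn r s = logn r s'.
  move=> pr lt_rq; have := logn_sc r.
  by rewrite !lognM // logn_c // logn_c' ?(leq_trans lt_rq le_qq') // !addn0.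
have [le_log|lt_log] := leqP (logn q s) (logn q s').
  apply/orP; left; apply: dvdn_from_logn => // r pr r_dvd.
  by case: ltngtP (smooth _ pr r_dvd) => // [/(logn_below _ pr) -> | ->].
have pq : prime q.
  by move: (leq_ltn_trans (leq0n _) lt_log); rewrite logn_gt0 mem_primes => /andP[].
have eq_qq' : q = q'.
  apply/eqP; rewrite eqn_leq le_qq' leqNgt; apply/negP => lt_qq'.
  have := logn_sc q; rewrite !lognM // logn_c' // addn0 => eq_log.
  by move: lt_log; rewrite -eq_log ltnNge leq_addr.
apply/orP; right; apply: dvdn_from_logn => // r pr r_dvd.
rewrite -eq_qq' in smooth'.
by case: ltngtP (smooth' _ pr r_dvd) => // [/(logn_below _ pr) -> // | -> _]; apply: ltnW.
Qed.

Lemma astarK a : astar a * P a = a.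
Proof. exact/divnK/max_pdiv_dvd. Qed.

Lemma composite_P_prime a : composite a -> prime (P a).
Proof. by case=> a_gt1 _; apply: max_pdiv_prime. Qed.

Lemma composite_astar_gt1 a : composite a -> 1 < astar a.
Proof.
move=> ca; have pa := composite_P_prime ca; case: ca => a_gt1 a_nprime.
have := astarK a; case: (astar a) => [|[|s]] // ea; first by rewrite -ea in a_gt1.
by rewrite mul1n in ea; rewrite -ea pa in a_nprime.
Qed.

Lemma composite_P_astar_prime a : composite a -> prime (P (astar a)).
Proof. by move/composite_astar_gt1; apply: max_pdiv_prime. Qed.

Lemma Lset_gt0 m x : 0 < m -> Lset m x -> 0 < x.
Proof. by move=> m_gt0 [b [b_gt0 [_ ->]]]; rewrite muln_gt0 b_gt0. Qed.

Lemma Lset_dvdn m x : Lset m x -> m %| x.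
Proof. by move=> [b [_ [_ ->]]]; apply: dvdn_mull. Qed.

Lemma Lset_logn m x r : 0 < m -> Lset m x -> prime r -> r < P m ->
  logn r x = logn r m.
Proof.
move=> m_gt0 [b [b_gt0 [rough ->]]] pr lt_rP.
rewrite lognM // logn_eq0_ndvd //; apply/negP => /(rough _ pr).
by rewrite leqNgt lt_rP.
Qed.

Section LnNat.
Local Open Scope R_scope.

Lemma INR_gt0 n : (0 < n)%N -> 0 < INR n.
Proof. by move/ltP; apply: lt_0_INR. Qed.

Lemma ln_INR_le m n : (0 < m)%N -> (m <= n)%N -> ln (INR m) <= ln (INR n).
Proof.
move=> m_gt0; rewrite leq_eqVlt => /orP[/eqP -> | lt_mn]; first exact: Rle_refl.
by apply/Rlt_le/ln_increasing; [exact: INR_gt0 | apply/lt_INR/ltP].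
Qed.

Lemma ln_INR_lt_inv m n : (0 < m)%N -> (0 < n)%N -> ln (INR m) < ln (INR n) ->
  (m < n)%N.
Proof.
by move=> m_gt0 n_gt0 lt_ln; apply/ltP/INR_lt/ln_lt_inv => //; apply: INR_gt0.
Qed.

Lemma ln_prime_gt0 p : prime p -> 0 < ln (INR p).
Proof.
move/prime_gt1/ltP/lt_INR => /= gt1; rewrite -ln_1.
by apply: ln_increasing; lra.
Qed.

Lemma ln_lt_of_lt_Rpower n x y : (0 < n)%N -> INR n < Rpower x y ->
  ln (INR n) < y * ln x.
Proof.
by move=> n_gt0 lt_n; rewrite -[y * ln x]ln_exp; apply: ln_increasing => //; apply: INR_gt0.
Qed.

End LnNat.

Section Admissible.

Variable v : R.
Hypothesis v01 : Rlt R0 v /\ Rlt v R1.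

Definition admissible (a c : nat) : Prop :=
  composite a /\ Rlt (INR a) (Rpower (INR (P a)) (Rplus R1 v)) /\ Cset a v c.

Section LogBounds.
Local Open Scope R_scope.

Lemma sqrt_gt0 : 0 < sqrt v.
Proof. by apply: sqrt_lt_R0; lra. Qed.

Lemma sqrt_lt1 : sqrt v < 1.
Proof.
have tt : sqrt v * sqrt v = v by apply: sqrt_sqrt; lra.
have := sqrt_gt0; nra.
Qed.

Lemma Cset_ln_lt a c r : Cset a v c -> prime r -> r %| c ->
  sqrt v * ln (INR r) < ln (INR (P (astar a))).
Proof.
move=> [_ bounds] pr r_dvd; have [_ lt_r] := bounds r pr r_dvd.
have t_gt0 := sqrt_gt0.
have := ln_lt_of_lt_Rpower (prime_gt0 pr) lt_r.
set L := ln (INR (P (astar a))) => lt_ln.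
have -> : L = sqrt v * (R1 / sqrt v * L) by field; lra.
exact: Rmult_lt_compat_l.
Qed.

Lemma admissible_ln_lt a c r : admissible a c -> prime r -> r %| astar a * c ->
  ln (INR r) < sqrt v * ln (INR (P a)).
Proof.
move=> [ca [growth Cc]] pr r_dvd; set t := sqrt v.
have t_gt0 : 0 < t := sqrt_gt0.
have t_lt1 : t < 1 := sqrt_lt1.
have tt : t * t = v by apply: sqrt_sqrt; lra.
have s_gt0 := ltnW (composite_astar_gt1 ca).
have pp := composite_P_prime ca; have pq := composite_P_astar_prime ca.
have lnp_gt0 := ln_prime_gt0 pp.
have ln_s : ln (INR (astar a)) < v * ln (INR (P a)).
  have a_gt0 : (0 < a)%N by rewrite -(astarK a) muln_gt0 s_gt0 prime_gt0.
  have := ln_lt_of_lt_Rpower a_gt0 growth.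
  rewrite -{1}(astarK a) mult_INR ln_mult; [lra | exact: INR_gt0 | exact/INR_gt0/prime_gt0].
have ln_q : ln (INR (P (astar a))) <= ln (INR (astar a)).
  exact/ln_INR_le/dvdn_leq/max_pdiv_dvd/s_gt0/prime_gt0.
have tlnp_gt0 : 0 < t * ln (INR (P a)) by nra.
rewrite -tt in ln_s.
move: r_dvd; rewrite Euclid_dvdM // => /orP[r_s | r_c].
  have r_le_q : (r <= P (astar a))%N by apply: leq_max_pdiv.
  have := ln_INR_le (prime_gt0 pr) r_le_q; nra.
have := Cset_ln_lt Cc pr r_c; rewrite -/t; nra.
Qed.

Lemma admissible_prime_lt a c r : admissible a c -> prime r -> r %| astar a * c ->
  (r < P a)%N.
Proof.
move=> adm pr r_dvd; have [ca _] := adm; have pp := composite_P_prime ca.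
apply: ln_INR_lt_inv (prime_gt0 pr) (prime_gt0 pp) _.
have := admissible_ln_lt adm pr r_dvd.
have := Rmult_lt_compat_r _ _ _ (ln_prime_gt0 pp) sqrt_lt1; lra.
Qed.

Lemma admissible_cross a c a' c' r : admissible a c -> admissible a' c' ->
  (P a %| c') || (P a <= P (astar a'))%N -> prime r -> r %| astar a * c ->
  (r < P (astar a'))%N.
Proof.
move=> adm [ca' [_ Cc']] /orP[p_c' | le_pq'] pr r_dvd; last first.
  exact: leq_trans (admissible_prime_lt adm pr r_dvd) le_pq'.
have [ca _] := adm.
apply: ln_INR_lt_inv (prime_gt0 pr) (prime_gt0 (composite_P_astar_prime ca')) _.
have := admissible_ln_lt adm pr r_dvd.
have := Cset_ln_lt Cc' (composite_P_prime ca) p_c'; lra.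
Qed.

End LogBounds.

Lemma admissible_P_mul a c : admissible a c -> P (a * c) = P a.
Proof.
move=> adm; have [[a_gt1 _] [_ [c_gt0 _]]] := adm.
have pp := composite_P_prime (proj1 adm).
have ac_eq : a * c = astar a * c * P a by rewrite mulnAC astarK.
apply: max_pdiv_eq => //; first by rewrite muln_gt0 c_gt0 (ltnW a_gt1).
  by rewrite ac_eq dvdn_mull.
move=> r pr; rewrite ac_eq Euclid_dvdM // => /orP[r_dvd | ].
  exact/ltnW/(admissible_prime_lt adm pr r_dvd).
by rewrite dvdn_prime2 // => /eqP ->.
Qed.

Lemma Lset_admissible_logn a c x r : admissible a c -> Lset (a * c) x ->
  prime r -> r < P a -> logn r x = logn r (astar a * c).
Proof.
move=> adm Lx pr lt_rp; have [[a_gt1 _] [_ [c_gt0 _]]] := adm.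
have s_gt0 := ltnW (composite_astar_gt1 (proj1 adm)).
have pp := composite_P_prime (proj1 adm).
rewrite (Lset_logn _ Lx pr) ?admissible_P_mul // ?muln_gt0 ?c_gt0 ?(ltnW a_gt1) //.
rewrite -[in a * c](astarK a) mulnAC lognM ?muln_gt0 ?s_gt0 ?c_gt0 ?prime_gt0 //.
by rewrite (logn_prime _ pp) ltn_eqF ?addn0.
Qed.

Lemma admissible_astar_mul_gt0 a c : admissible a c -> 0 < astar a * c.
Proof.
by case=> ca [_ [c_gt0 _]]; rewrite muln_gt0 c_gt0 (ltnW (composite_astar_gt1 ca)).
Qed.

Section TwoPairs.

Variables (a c a' c' x : nat).
Hypotheses (adm : admissible a c) (adm' : admissible a' c').
Hypotheses (Lx : Lset (a * c) x) (Lx' : Lset (a' * c') x).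

Lemma admissible_dvdn_of_ltn_P : P a < P a' -> a %| a'.
Proof.
move=> lt_PP.
have [[a_gt1 _] [_ [c_gt0 _]]] := adm; have [ca' [_ [c_gt0' rough']]] := adm'.
have pp := composite_P_prime (proj1 adm); have pq' := composite_P_astar_prime ca'.
have s_gt0 := ltnW (composite_astar_gt1 (proj1 adm)).
have s_gt0' := ltnW (composite_astar_gt1 ca').
have sc_gt0 := admissible_astar_mul_gt0 adm.
have sc_gt0' := admissible_astar_mul_gt0 adm'.
have x_gt0 : 0 < x by apply: Lset_gt0 Lx; rewrite muln_gt0 c_gt0 (ltnW a_gt1).
have logn_agree r : prime r -> r < P a -> logn r (astar a * c) = logn r (astar a' * c').
  move=> pr lt_rp; rewrite -(Lset_admissible_logn adm Lx) //.
  by rewrite (Lset_admissible_logn adm' Lx') // (ltn_trans lt_rp).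
have p_dvd : P a %| astar a' * c'.
  rewrite -logn_gt0_prime // -(Lset_admissible_logn adm' Lx') // logn_gt0_prime //.
  exact: dvdn_trans (dvdn_mulr c (max_pdiv_dvd a)) (Lset_dvdn Lx).
have below_q' : forall r, prime r -> r %| astar a * c -> r < P (astar a').
  move=> r pr r_dvd; apply: admissible_cross adm adm' _ pr r_dvd.
  move: p_dvd; rewrite Euclid_dvdM // => /orP[p_s' | ->] //.
  by rewrite leq_max_pdiv ?orbT.
have p_le_q' : P a <= P (astar a').
  rewrite leqNgt; apply/negP => lt_q'p.
  have q'_dvd : P (astar a') %| astar a * c.
    rewrite -logn_gt0_prime // logn_agree // logn_gt0_prime //.
    exact/dvdn_mulr/max_pdiv_dvd.
  by have := below_q' _ pq' q'_dvd; rewrite ltnn.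
have p_dvd_s' : P a %| astar a'.
  move: p_dvd; rewrite Euclid_dvdM // => /orP[// | /(rough' _ pp) [le_q'p _]].
  have -> : P a = P (astar a') by apply/anti_leq; rewrite p_le_q' le_q'p.
  exact: max_pdiv_dvd.
have s_dvd_s' : astar a %| astar a'.
  apply: dvdn_from_logn => // r pr r_s.
  have lt_rp := admissible_prime_lt adm pr (dvdn_mulr c r_s).
  have c'_free : logn r c' = 0.
    apply/logn_eq0_ndvd/negP => /(rough' _ pr) [+ _].
    by rewrite leqNgt (leq_trans lt_rp p_le_q').
  have := logn_agree r pr lt_rp.
  rewrite !lognM // c'_free addn0 => <-.
  exact: leq_addr.
rewrite -(astarK a) -(astarK a') dvdn_mulr // Gauss_dvd ?s_dvd_s' //.
rewrite coprime_sym prime_coprime //; apply/negP => p_s.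
by have := admissible_prime_lt adm pp (dvdn_mulr c p_s); rewrite ltnn.
Qed.

Lemma admissible_eq_of_eq_P : P a = P a' -> astar a * c = astar a' * c'.
Proof.
move=> eq_PP.
have sc_gt0 := admissible_astar_mul_gt0 adm.
have sc_gt0' := admissible_astar_mul_gt0 adm'.
apply/eqP; rewrite eqn_dvd; apply/andP; split; apply: dvdn_from_logn => // r pr r_dvd.
  have lt_rp := admissible_prime_lt adm pr r_dvd.
  by rewrite -(Lset_admissible_logn adm Lx) // (Lset_admissible_logn adm' Lx') -?eq_PP.
have lt_rp := admissible_prime_lt adm' pr r_dvd.
by rewrite -(Lset_admissible_logn adm' Lx') // (Lset_admissible_logn adm Lx) ?eq_PP.
Qed.

End TwoPairs.

Lemma admissible_dvdn_total a c a' c' x :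
  admissible a c -> admissible a' c' -> Lset (a * c) x -> Lset (a' * c') x ->
  (a %| a') || (a' %| a).
Proof.
move=> adm adm' Lx Lx'.
case: (ltngtP (P a) (P a')) => [lt_PP | gt_PP | eq_PP].
- by rewrite (admissible_dvdn_of_ltn_P adm adm' Lx Lx' lt_PP).
- by rewrite (admissible_dvdn_of_ltn_P adm' adm Lx' Lx gt_PP) orbT.
have [ca [_ [c_gt0 bounds]]] := adm; have [ca' [_ [c_gt0' bounds']]] := adm'.
have s_gt0 := ltnW (composite_astar_gt1 ca); have s_gt0' := ltnW (composite_astar_gt1 ca').
have := dvdn_total_of_smooth_mul_rough s_gt0 c_gt0 s_gt0' c_gt0'
  (fun r pr => leq_max_pdiv pr s_gt0) (fun r pr r_c => proj1 (bounds r pr r_c))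
  (fun r pr => leq_max_pdiv pr s_gt0') (fun r pr r_c => proj1 (bounds' r pr r_c))
  (admissible_eq_of_eq_P adm adm' Lx Lx' eq_PP).
have p_gt0 := prime_gt0 (composite_P_prime ca').
by case/orP => dvd_s; apply/orP; [left | right];
  rewrite -(astarK a) -(astarK a') eq_PP dvdn_pmul2r.
Qed.

End Admissible.

Theorem lemma3p1 (A : nat -> Prop) (v : R) :
  primitive_set A ->
  (forall a, A a -> composite a) ->
  Rlt R0 v /\ Rlt v R1 ->
  (forall a, A a -> Rlt (INR a) (Rpower (INR (P a)) (Rplus R1 v))) ->
  forall a c a' c',
    A a -> Cset a v c -> A a' -> Cset a' v c' ->
    (a, c) <> (a', c') ->
    forall x, ~ (Lset (a * c) x /\ Lset (a' * c') x).
Proof.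
move=> prim compA v01 growth a c a' c' Aa Cc Aa' Cc' neq x [Lx Lx'].
have adm : admissible v a c by split; [exact: compA | split; [exact: growth |]].
have adm' : admissible v a' c' by split; [exact: compA | split; [exact: growth |]].
have eq_aa' : a = a'.
  case/orP: (admissible_dvdn_total v01 adm adm' Lx Lx') => [dvd_aa' | dvd_a'a].
    exact: prim dvd_aa'.
  exact/esym/prim.
subst a'; apply: neq; congr pair; apply/eqP.
have := admissible_eq_of_eq_P v01 adm adm' Lx Lx' erefl.
by move/eqP; rewrite eqn_pmul2l // (ltnW (composite_astar_gt1 (compA a Aa))).
Qed.
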